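(* Consider $\dot y=A(t)y+B(t)(u+\Delta(y,t))$, $y\in\mathbb{R}^{\bar n}$, $u\in\mathbb{R}^{\bar m}$, with continuous, bounded, $T$-periodic $A,B$, and a continuous $T$-periodic $K(t)$ such that the origin of $\dot\chi=A^{cl}(t)\chi$, $A^{cl}=A+BK$, is exponentially stable, with state-transition matrix $\Psi_{A^{cl}}$. Let $(L(t),F,Y)$ be a real $2T$-periodic Floquet--Lyapunov factorization: $\Psi_{A^{cl}}(t,0)=L(t)e^{Ft}$ with $L$ real, nonsingular, $\mathcal{C}^1$, $F,Y$ real commuting matrices, $L(t+2T)=L(t)$, $L(t+T)=L(t)Y$, $Y^2=I_{\bar n}$. Suppose $F$ has a real invariant subspace $\Lambda$ of codimension $\bar m$, $\hat S\in\mathbb{R}^{\bar m\times\bar n}$ is a full-rank left annihilator of $\Lambda$, and $\operatorname{rank}[\hat S L^{-1}(t)B(t)]=\bar m$ for all $t\in[0,2T)$. Then $S(t):=\hat S L^{-1}(t)$ is $T$-periodic if $\hat S=\hat SY$. *)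

From HB Require Import structures.
From mathcomp Require Import all_boot all_order all_algebra.
From mathcomp Require Import all_classical all_reals all_analysis.
Set Implicit Arguments. Unset Strict Implicit. Unset Printing Implicit Defensive.
Import Order.TTheory GRing.Theory Num.Theory.
Import numFieldNormedType.Exports.
Local Open Scope ring_scope.

Definition mxpow (R : realType) (n : nat) (M : 'M[R]_n) (k : nat) : 'M[R]_n :=
  iter k (mulmx M) 1%:M.

Definition mxexp (R : realType) (n : nat) (M : 'M[R]_n) : 'M[R]_n :=
  limn (series (fun k : nat => (k`!%:R)^-1 *: mxpow M k)).

Definition Tperiodic (R : realType) (V : Type) (T : R) (f : R -> V) : Prop :=
  forall t : R, f (t + T) = f t.

Definition bounded_mxfun (R : realType) (p q : nat) (f : R -> 'M[R]_(p, q)) : Prop :=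
  exists M : R, forall t : R, `|f t| <= M.

Definition C1_mxfun (R : realType) (p q : nat) (f : R -> 'M[R]_(p, q)) : Prop :=
  (forall t : R, derivable f t 1) /\ continuous (derive1 f).

Definition state_transition (R : realType) (n : nat)
    (A : R -> 'M[R]_n) (Psi : R -> R -> 'M[R]_n) : Prop :=
  (forall s : R, Psi s s = 1%:M) /\
  (forall t s : R, derivable (fun r => Psi r s) t 1 /\
                   derive1 (fun r => Psi r s) t = A t *m Psi t s).

Definition exp_stable_origin (R : realType) (n : nat) (Psi : R -> R -> 'M[R]_n) : Prop :=
  exists (k lam : R), 0 < k /\ 0 < lam /\
    forall t s : R, s <= t -> `|Psi t s| <= k * expR (- lam * (t - s)).

From HB Require Import structures.
From mathcomp Require Import all_boot all_order all_algebra.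
From mathcomp Require Import all_classical all_reals all_analysis.
Import Order.TTheory GRing.Theory Num.Theory.
Import numFieldNormedType.Exports.
Local Open Scope ring_scope.

(* Only the half-period relation L(t + T) = L(t) Y and Y^2 = I matter:
   S(t + T) = Shat (L(t) Y)^-1 = Shat Y^-1 L(t)^-1 = Shat Y L(t)^-1 = S(t). *)

Lemma invmxM {R : comUnitRingType} {n : nat} (A B : 'M[R]_n) :
  A \in unitmx -> B \in unitmx -> invmx (A *m B) = invmx B *m invmx A.
Proof.
move=> uA uB; have uAB : A *m B \in unitmx by rewrite unitmx_mul uA uB.
apply: (can_inj (mulKmx uAB)).
by rewrite mulmxV // mulmxA -(mulmxA A) mulmxV // mulmx1 mulmxV.
Qed.

Lemma mulmx1_invmx {R : comUnitRingType} {n : nat} {A B : 'M[R]_n} :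
  A *m B = 1%:M -> invmx A = B.
Proof.
move=> AB1; have [uA _] := mulmx1_unit AB1.
by apply: (can_inj (mulKmx uA)); rewrite mulmxV.
Qed.

Lemma Tperiodic_mulmx_invmx (R : realType) (m n : nat) (T : R)
    (L : R -> 'M[R]_n) (Y : 'M[R]_n) (S : 'M[R]_(m, n)) :
  (forall t, L t \in unitmx) -> Y *m Y = 1%:M -> S *m Y = S ->
  (forall t, L (t + T) = L t *m Y) ->
  Tperiodic T (fun t => S *m invmx (L t)).
Proof.
move=> uL YY SY LT t /=; have [uY _] := mulmx1_unit YY.
by rewrite LT invmxM // (mulmx1_invmx YY) mulmxA SY.
Qed.

Theorem corollary1 (R : realType) (n m : nat) (T : R)
    (A : R -> 'M[R]_n) (B : R -> 'M[R]_(n, m)) (K : R -> 'M[R]_(m, n))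
    (Psi : R -> R -> 'M[R]_n)
    (L : R -> 'M[R]_n) (F Y : 'M[R]_n)
    (Lam : 'M[R]_n) (Shat : 'M[R]_(m, n)) :
  0 < T ->
  continuous A -> bounded_mxfun A -> Tperiodic T A ->
  continuous B -> bounded_mxfun B -> Tperiodic T B ->
  continuous K -> Tperiodic T K ->
  state_transition (fun t => A t + B t *m K t) Psi ->
  exp_stable_origin Psi ->
  (* real 2T-Tperiodic Floquet--Lyapunov factorization (L, F, Y) *)
  (forall t, Psi t 0 = L t *m mxexp (t *: F)) ->
  (forall t, L t \in unitmx) ->
  C1_mxfun L ->
  F *m Y = Y *m F ->
  (forall t, L (t + 2 * T) = L t) ->
  (forall t, L (t + T) = L t *m Y) ->
  Y *m Y = 1%:M ->
  (* Lam: real F-invariant subspace (spanned by the columns of Lam^T,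
     i.e. the row space of Lam, as column vectors) of codimension m *)
  (Lam *m F^T <= Lam)%MS ->
  \rank Lam = (n - m)%N ->
  (* Shat: full-rank left annihilator of Lam *)
  \rank Shat = m ->
  Shat *m Lam^T = 0 ->
  (forall t, 0 <= t < 2 * T -> \rank (Shat *m invmx (L t) *m B t) = m) ->
  Shat = Shat *m Y ->
  Tperiodic T (fun t => Shat *m invmx (L t)).
Proof.
move=> _ _ _ _ _ _ _ _ _ _ _ _ uL _ _ _ LT YY _ _ _ _ _ SY.
exact: Tperiodic_mulmx_invmx uL YY (esym SY) LT.
Qed.
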